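(* Let $n,k,N$ be positive integers, let $\Omega=(\omega_1,\dots,\omega_k)'$ be a probability vector and let $M=(\mu_{i,j})\in\mathbb{R}^{n\times k}$ be a matrix whose columns are probability vectors on $\{1,\dots,n\}$. Let $c_1,\dots,c_N$ be positive integers (document lengths) such that $\sum_{i=1}^N c_i>0$, $\sum_{i=1}^N c_i(c_i-1)>0$ and $\sum_{i=1}^N c_i(c_i-1)(c_i-2)>0$. Let $X^{(1)},\dots,X^{(N)}$ be $N$ documents generated independently according to the single topic model with parameters $(M,\Omega)$, document $i$ having $c_i$ words. Define: \begin{itemize} \item $\tilde M_1\in\mathbb{R}^n$ by $(\tilde M_1)_h=\dfrac{\sum_{i=1}^N (X^{(i)})_h}{\sum_{i=1}^N c_i}$; \item the symmetric matrix $\tilde M_2\in\mathbb{R}^{n\times n}$ by, for $h\neq l$, $(\tilde M_2)_{h,l}=\dfrac{\sum_{i=1}^N (X^{(i)})_h (X^{(i)})_l}{\sum_{i=1}^N (c_i-1)c_i}$ and $(\tilde M_2)_{h,h}=\dfrac{\sum_{i=1}^N (X^{(i)})_h((X^{(i)})_h-1)}{\sum_{i=1}^N (c_i-1)c_i}$; \item the symmetric tensor $\tilde M_3\in\mathbb{R}^{n\times n\times n}$ (invariant under permutation of its three indices) by, for pairwise distinct $h,l,m$, $(\tilde M_3)_{h,l,m}=\dfrac{\sum_{i=1}^N (X^{(i)})_h (X^{(i)})_l (X^{(i)})_m}{\sum_{i=1}^N (c_i-2)(c_i-1)c_i}$, for $h\neq l$, $(\tilde M_3)_{h,l,l}=\dfrac{\sum_{i=1}^N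 (X^{(i)})_h (X^{(i)})_l ((X^{(i)})_l-1)}{\sum_{i=1}^N (c_i-2)(c_i-1)c_i}$, and $(\tilde M_3)_{l,l,l}=\dfrac{\sum_{i=1}^N (X^{(i)})_l ((X^{(i)})_l-1)((X^{(i)})_l-2)}{\sum_{i=1}^N (c_i-2)(c_i-1)c_i}$. \end{itemize} Then for all $h,l,m\in\{1,\dots,n\}$: $\mathbb{E}[(\tilde M_1)_h]=\sum_{j=1}^k \omega_j\mu_{h,j}$, $\mathbb{E}[(\tilde M_2)_{h,l}]=\sum_{j=1}^k\omega_j\mu_{h,j}\mu_{l,j}$, and $\mathbb{E}[(\tilde M_3)_{h,l,m}]=\sum_{j=1}^k\omega_j\mu_{h,j}\mu_{l,j}\mu_{m,j}$.
   Context: Single topic model: for each document independently, a hidden topic $Y\in\{1,\dots,k\}$ is drawn with $\mathbb{P}(Y=j)=\omega_j$; given $Y=j$, each of the $c_i$ words of the document is drawn independently, word $h\in\{1,\dots,n\}$ having probability $\mu_{h,j}$. A word is encoded as the standard basis vector $e_h\in\mathbb{R}^n$, and $X^{(i)}\in\mathbb{R}^n$ is the sum of the encodings of the words of document $i$, i.e. $(X^{(i)})_h$ is the number of occurrences of word $h$ in document $i$. The lengths $c_i$ are fixed (non-random). *)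

From mathcomp Require Import all_boot all_order all_algebra.
Set Implicit Arguments. Unset Strict Implicit. Unset Printing Implicit Defensive.
Import Order.TTheory GRing.Theory Num.Theory.
Local Open Scope ring_scope.

Section SingleTopic.
Variables (R : realFieldType) (n k N : nat) (c : 'I_N -> nat).

(* word slots: pairs (i, t) with document i and position t < c i *)
Definition slot := {i : 'I_N & 'I_(c i)}.

(* an outcome: the topic of each document and the word in each slot *)
Definition outcome := ({ffun 'I_N -> 'I_k} * {ffun slot -> 'I_n})%type.

Definition prob (M : 'M[R]_(n, k)) (Om : 'cV[R]_k) (s : outcome) : R :=
  (\prod_(i < N) Om (s.1 i) 0) *
  \prod_(p : slot) M (s.2 p) (s.1 (tag p)).

Definition expect (M : 'M[R]_(n, k)) (Om : 'cV[R]_k) (F : outcome -> R) : R :=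
  \sum_(s : outcome) prob M Om s * F s.

Definition X (s : outcome) (i : 'I_N) (h : 'I_n) : R :=
  (#|[set t : 'I_(c i) | s.2 (Tagged (fun j => 'I_(c j)) t) == h]|)%:R.

Definition den1 : R := (\sum_(i < N) c i)%:R.
Definition den2 : R := \sum_(i < N) ((c i)%:R - 1) * (c i)%:R.
Definition den3 : R :=
  \sum_(i < N) ((c i)%:R - 2) * ((c i)%:R - 1) * (c i)%:R.

Definition M1t (s : outcome) (h : 'I_n) : R :=
  (\sum_(i < N) X s i h) / den1.

Definition M2t (s : outcome) (h l : 'I_n) : R :=
  if h == l then (\sum_(i < N) X s i h * (X s i h - 1)) / den2
  else (\sum_(i < N) X s i h * X s i l) / den2.

(* entry with indices (h, l, l), h <> l *)
Definition M3pair (s : outcome) (h l : 'I_n) : R :=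
  (\sum_(i < N) X s i h * X s i l * (X s i l - 1)) / den3.

Definition M3t (s : outcome) (h l m : 'I_n) : R :=
  if (h == l) && (l == m) then
    (\sum_(i < N) X s i l * (X s i l - 1) * (X s i l - 2)) / den3
  else if h == l then M3pair s m h
  else if l == m then M3pair s h l
  else if h == m then M3pair s l h
  else (\sum_(i < N) X s i h * X s i l * X s i m) / den3.

End SingleTopic.

Arguments prob {R n k N c} M Om s.
Arguments expect {R n k N c} M Om F.
Arguments X {R n k N c} s i h.
Arguments M1t {R n k N c} s h.
Arguments M2t {R n k N c} s h l.
Arguments M3pair {R n k N c} s h l.
Arguments M3t {R n k N c} s h l m.
Arguments den1 {R N} c.
Arguments den2 {R N} c.
Arguments den3 {R N} c.

(* Write (X^(i))_h as the sum over the positions t of document i of the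
   indicator that word t is h.  Expanding products of such sums, X_h X_l - [h = l] X_h
   is the sum over ordered pairs of distinct positions, and similarly for triples, so
   the numerators of M2 and M3 are sums over ordered pairs and triples of distinct
   positions in a document.  Given the topic j of the document, distinct positions
   carry independent words, so each term has expectation
   sum_j w_j mu_{h,j} mu_{l,j} (mu_{m,j}); document i contributes c_i (c_i - 1)
   (c_i - 2) such terms, which is exactly what the denominators count. *)

From mathcomp Require Import all_boot all_order all_algebra.
From mathcomp Require Import ring.
Import Order.TTheory GRing.Theory Num.Theory.
Set Implicit Arguments. Unset Strict Implicit. Unset Printing Implicit Defensive.

Local Open Scope ring_scope.

Section Occurrences.
Variables (R : comPzRingType) (T : finType) (W : eqType) (w : T -> W).

Definition hit (t : T) (h : W) : R := (w t == h)%:R.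

Definition nocc (h : W) : R := \sum_t hit t h.

Definition pair_hits (h l : W) : R :=
  \sum_t \sum_(t' | t' != t) hit t h * hit t' l.

Definition triple_hits (h l m : W) : R :=
  \sum_t \sum_(t' | t' != t) \sum_(t'' | (t'' != t) && (t'' != t'))
    hit t h * hit t' l * hit t'' m.

Lemma hit_mul_hit t h l : hit t h * hit t l = (h == l)%:R * hit t h.
Proof.
rewrite /hit; have [->|_] := eqVneq (w t) h; first by rewrite mulr1 mul1r.
by rewrite mul0r mulr0.
Qed.

Lemma nocc_mul h l : nocc h * nocc l = (h == l)%:R * nocc h + pair_hits h l.
Proof.
rewrite /nocc mulr_suml mulr_sumr -big_split; apply: eq_bigr => t _ /=.
by rewrite mulr_sumr (bigD1 t) //= hit_mul_hit.
Qed.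

Lemma pair_hits_mul_nocc h l m :
  pair_hits h l * nocc m = triple_hits h l m + ((h == m)%:R + (l == m)%:R) * pair_hits h l.
Proof.
rewrite /pair_hits /triple_hits mulr_suml mulr_sumr -big_split; apply: eq_bigr => t _ /=.
rewrite mulr_suml mulr_sumr -big_split; apply: eq_bigr => t' t't /=.
rewrite /nocc (bigD1 t) //= (bigD1 t') /=; last by rewrite t't.
rewrite -mulr_sumr; set rest := \sum_(_ | _) _.
transitivity (hit t h * hit t m * hit t' l + hit t' l * hit t' m * hit t h
              + hit t h * hit t' l * rest); first by ring.
by rewrite !hit_mul_hit; ring.
Qed.

Lemma pair_hitsE h l : pair_hits h l = nocc h * nocc l - (h == l)%:R * nocc h.
Proof. by rewrite nocc_mul; ring. Qed.

Lemma pair_hits_diag h : nocc h * (nocc h - 1) = pair_hits h h.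
Proof. by rewrite pair_hitsE eqxx /=; ring. Qed.

Lemma pair_hits_offdiag h l : h != l -> nocc h * nocc l = pair_hits h l.
Proof. by move=> hl; rewrite pair_hitsE (negPf hl) /=; ring. Qed.

Lemma pair_hitsC h l : pair_hits h l = pair_hits l h.
Proof.
have [<-//|hl] := eqVneq h l.
have lh : l != h by rewrite eq_sym.
by rewrite -(pair_hits_offdiag hl) -(pair_hits_offdiag lh) mulrC.
Qed.

Lemma triple_hitsE h l m : triple_hits h l m =
  pair_hits h l * nocc m - ((h == m)%:R + (l == m)%:R) * pair_hits h l.
Proof. by rewrite pair_hits_mul_nocc; ring. Qed.

Lemma triple_hits_swap12 h l m : triple_hits h l m = triple_hits l h m.
Proof. by rewrite !triple_hitsE pair_hitsC; ring. Qed.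

Lemma triple_hits_swap23 h l m : triple_hits h l m = triple_hits h m l.
Proof.
have [<-//|lm] := eqVneq l m.
by rewrite !triple_hitsE !pair_hitsE (eq_sym m l) (negPf lm) /=; ring.
Qed.

Lemma triple_hits_diag l :
  nocc l * (nocc l - 1) * (nocc l - 2) = triple_hits l l l.
Proof. by rewrite triple_hitsE -pair_hits_diag eqxx /=; ring. Qed.

Lemma triple_hits_pair h l : h != l ->
  nocc h * nocc l * (nocc l - 1) = triple_hits h l l.
Proof.
by move=> hl; rewrite triple_hitsE -pair_hits_offdiag // (negPf hl) eqxx /=; ring.
Qed.

Lemma triple_hits_offdiag h l m : h != l -> l != m -> h != m ->
  nocc h * nocc l * nocc m = triple_hits h l m.
Proof.
move=> hl lm hm.
by rewrite triple_hitsE -pair_hits_offdiag // (negPf lm) (negPf hm) /=; ring.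
Qed.

End Occurrences.

Section DistinctTuples.
Variables (R : comPzRingType) (T : finType).

Lemma sum_neq1_const (t : T) (x : R) : \sum_(u | u != t) x = x * (#|T|%:R - 1).
Proof.
have sumT : \sum_(u : T) x = x * #|T|%:R by rewrite sumr_const mulr_natr.
by rewrite (bigD1 t) //= in sumT; rewrite mulrBr mulr1 -sumT; ring.
Qed.

Lemma sum_neq2_const (t t' : T) (x : R) : t' != t ->
  \sum_(u | (u != t) && (u != t')) x = x * (#|T|%:R - 2).
Proof.
move=> t't; have sum_t := sum_neq1_const t x; rewrite (bigD1 t') //= in sum_t.
by apply: (addrI x); rewrite sum_t; ring.
Qed.

Lemma sum_distinct_pairs_const (x : R) :
  \sum_(t : T) \sum_(t' | t' != t) x = x * ((#|T|%:R - 1) * #|T|%:R).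
Proof.
under eq_bigr do rewrite sum_neq1_const.
by rewrite sumr_const -mulr_natr; ring.
Qed.

Lemma sum_distinct_triples_const (x : R) :
  \sum_(t : T) \sum_(t' | t' != t) \sum_(t'' | (t'' != t) && (t'' != t')) x =
  x * ((#|T|%:R - 2) * (#|T|%:R - 1) * #|T|%:R).
Proof.
transitivity (\sum_(t : T) \sum_(t' | t' != t) x * (#|T|%:R - 2)).
  by apply: eq_bigr => t _; apply: eq_bigr => t'; exact: sum_neq2_const.
by rewrite sum_distinct_pairs_const; ring.
Qed.

End DistinctTuples.

Section ProbabilityWeights.
Variables (R : comPzRingType) (J : finType) (p : J -> R).
Hypothesis p_sum1 : \sum_j p j = 1.

Lemma sum_mul_prod_indicators (I : eqType) (L : seq I) (b : pred I) (g : I -> J) :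
  (count b L <= 1)%N ->
  \sum_y p y * \prod_(q <- L) (if b q then (y == g q)%:R else 1) =
  \prod_(q <- L) (if b q then p (g q) else 1).
Proof.
elim: L => [|q L IH] /=.
  by under eq_bigr do rewrite big_nil mulr1; rewrite big_nil.
rewrite big_cons; case bq: (b q) => /=.
- rewrite add1n ltnS leqn0 eqn0Ngt -has_count => /hasPn L0.
  have prod_L1 (f : I -> R) : \prod_(q <- L) (if b q then f q else 1) = 1.
    by rewrite big1_seq // => q' /andP[_ /L0 /negPf ->].
  rewrite prod_L1 mulr1.
  under eq_bigr do rewrite big_cons bq prod_L1 mulr1 mulr_natr mulrb.
  by rewrite -big_mkcond big_pred1_eq.
- rewrite add0n mul1r => /IH <-.
  by under eq_bigr do rewrite big_cons bq mul1r.
Qed.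

Lemma sum_ffun_prod_marginal (I : finType) (i0 : I) (G : J -> R) :
  \sum_(z : {ffun I -> J}) (\prod_i p (z i)) * G (z i0) = \sum_j p j * G j.
Proof.
transitivity (\sum_(z : {ffun I -> J}) \prod_i (p (z i) * (if i == i0 then G (z i) else 1))).
  apply: eq_bigr => z _; rewrite big_split /=; congr (_ * _).
  by rewrite -big_mkcond big_pred1_eq.
rewrite -(bigA_distr_bigA (fun i j => p j * (if i == i0 then G j else 1))) /=.
rewrite (bigD1 i0) //= [X in _ * X]big1 ?mulr1; first by under eq_bigr do rewrite eqxx.
by move=> i /negPf ->; under eq_bigr do rewrite mulr1.
Qed.

End ProbabilityWeights.

Definition slot_at {N} {c : 'I_N -> nat} {i : 'I_N} (t : 'I_(c i)) : slot c :=
  Tagged (fun j => 'I_(c j)) t.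

Definition doc {n k N} {c : 'I_N -> nat} (s : outcome n k c) (i : 'I_N) :
  'I_(c i) -> 'I_n := fun t => s.2 (slot_at t).
Arguments doc {n k N c} s i.

Lemma slot_at_inj N (c : 'I_N -> nat) (i : 'I_N) : injective (@slot_at N c i).
Proof. by move=> t t'; exact: eq_from_Tagged. Qed.

Section Estimators.
Variables (R : realFieldType) (n k N : nat) (c : 'I_N -> nat).

Lemma X_nocc (s : outcome n k c) i h : X s i h = nocc R (doc s i) h.
Proof.
rewrite /X -sum1_card natr_sum big_mkcond; apply: eq_bigr => t _.
by rewrite inE /hit /doc; case: ifP.
Qed.

Lemma M1t_nocc (s : outcome n k c) h : M1t s h = (\sum_i nocc R (doc s i) h) / den1 c.
Proof. by rewrite /M1t; under eq_bigr do rewrite X_nocc. Qed.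

Lemma M2t_pair_hits (s : outcome n k c) h l :
  M2t s h l = (\sum_i pair_hits R (doc s i) h l) / den2 c.
Proof.
rewrite /M2t; have [<-|hl] := eqVneq h l.
  by under eq_bigr do rewrite X_nocc pair_hits_diag.
by under eq_bigr do rewrite !X_nocc (pair_hits_offdiag _ _ hl).
Qed.

(* The symmetry of triple_hits absorbs the index rotations in the cases of M3t. *)
Lemma M3t_triple_hits (s : outcome n k c) h l m :
  M3t s h l m = (\sum_i triple_hits R (doc s i) h l m) / den3 c.
Proof.
rewrite /M3t /M3pair; have [<-|hl] := eqVneq h l; have [<-|hm] := eqVneq h m;
  rewrite ?eqxx /=.
- by under eq_bigr do rewrite X_nocc triple_hits_diag.
- rewrite eq_sym in hm.
  under eq_bigr do rewrite !X_nocc (triple_hits_pair _ _ hm).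
  by under eq_bigr do rewrite triple_hits_swap12 triple_hits_swap23.
- rewrite eq_sym in hl; rewrite (negPf hl).
  by under eq_bigr do rewrite !X_nocc (triple_hits_pair _ _ hl) triple_hits_swap12.
- have [<-|lm] := eqVneq l m; rewrite ?eqxx /=.
    by under eq_bigr do rewrite !X_nocc (triple_hits_pair _ _ hl).
  by under eq_bigr do rewrite !X_nocc (triple_hits_offdiag _ _ hl lm hm).
Qed.

End Estimators.

Section Moments.
Variables (R : realFieldType) (n k N : nat) (c : 'I_N -> nat).
Variables (M : 'M[R]_(n, k)) (Om : 'cV[R]_k).
Hypothesis Om_sum1 : \sum_(j < k) Om j 0 = 1.
Hypothesis M_col_sum1 : forall j, \sum_(h < n) M h j = 1.

Definition topic_moment (hs : seq 'I_n) : R :=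
  \sum_(j < k) Om j 0 * \prod_(h <- hs) M h j.

Lemma eq_expect (F G : outcome n k c -> R) :
  F =1 G -> expect M Om F = expect M Om G.
Proof. by move=> FG; apply: eq_bigr => s _; rewrite FG. Qed.

Lemma expect_sum (I : Type) (r : seq I) (P : pred I) (F : I -> outcome n k c -> R) :
  expect M Om (fun s => \sum_(i <- r | P i) F i s) =
  \sum_(i <- r | P i) expect M Om (F i).
Proof. by rewrite /expect; under eq_bigr do rewrite mulr_sumr; exact: exchange_big. Qed.

Lemma expect_divr (F : outcome n k c -> R) d :
  expect M Om (fun s => F s / d) = expect M Om F / d.
Proof. by rewrite /expect mulr_suml; apply: eq_bigr => s _; rewrite mulrA. Qed.

Lemma expect_prod_words (F : slot c -> 'I_n -> R) :
  expect M Om (fun s => \prod_p F p (s.2 p)) =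
  \sum_(z : {ffun 'I_N -> 'I_k}) (\prod_i Om (z i) 0) *
    \prod_p \sum_y M y (z (tag p)) * F p y.
Proof.
rewrite /expect /prob.
rewrite -(pair_bigA _ (fun (z : {ffun 'I_N -> 'I_k}) (w : {ffun slot c -> 'I_n}) =>
  (\prod_i Om (z i) 0 * \prod_p M (w p) (z (tag p))) * \prod_p F p (w p))) /=.
apply: eq_bigr => z _.
rewrite (bigA_distr_bigA (fun p y => M y (z (tag p)) * F p y)) mulr_sumr.
by apply: eq_bigr => w _; rewrite big_split /= mulrA.
Qed.

Lemma expect_hits (i : 'I_N) (L : seq ('I_(c i) * 'I_n)) : uniq (map fst L) ->
  expect M Om (fun s => \prod_(q <- L) hit R (doc s i) q.1 q.2) =
  topic_moment (map snd L).
Proof.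
move=> uL.
(* F p y is the indicator of the constraint that L puts on slot p (1 if none). *)
pose F p y := \prod_(q <- L) (if p == slot_at q.1 then (y == q.2)%:R else 1) : R.
have hitsF (s : outcome n k c) :
    \prod_(q <- L) hit R (doc s i) q.1 q.2 = \prod_p F p (s.2 p).
  rewrite /F exchange_big /=; apply: eq_bigr => q _.
  by rewrite -big_mkcond big_pred1_eq.
have sumF p j : \sum_y M y j * F p y =
                \prod_(q <- L) (if p == slot_at q.1 then M q.2 j else 1).
  rewrite (sum_mul_prod_indicators (M_col_sum1 j)) //.
  rewrite (eq_count (a2 := preim (fun q => slot_at q.1) (pred1 p))) => [|q]; last first.
    by rewrite /= eq_sym.
  rewrite -count_map count_uniq_mem ?leq_b1 //.
  by rewrite (map_comp slot_at fst) map_inj_uniq //; exact: slot_at_inj.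
have prodF (z : {ffun 'I_N -> 'I_k}) :
    \prod_p \sum_y M y (z (tag p)) * F p y = \prod_(q <- L) M q.2 (z i).
  under eq_bigr do rewrite sumF.
  rewrite exchange_big /=; apply: eq_bigr => q _.
  by rewrite -big_mkcond big_pred1_eq.
rewrite (eq_expect hitsF) expect_prod_words.
under eq_bigr do rewrite prodF.
rewrite (sum_ffun_prod_marginal (p := fun j => Om j 0) Om_sum1 i
          (fun j => \prod_(q <- L) M q.2 j)).
by apply: eq_bigr => j _; rewrite big_map.
Qed.

Lemma expect_hit (i : 'I_N) (t : 'I_(c i)) h :
  expect M Om (fun s => hit R (doc s i) t h) = topic_moment [:: h].
Proof.
rewrite -(expect_hits (L := [:: (t, h)])) //.
by apply: eq_expect => s; rewrite big_seq1.
Qed.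

Lemma expect_hit2 (i : 'I_N) (t t' : 'I_(c i)) h l : t' != t ->
  expect M Om (fun s => hit R (doc s i) t h * hit R (doc s i) t' l) =
  topic_moment [:: h; l].
Proof.
move=> t't; rewrite -(expect_hits (L := [:: (t, h); (t', l)])) /=; last first.
  by rewrite inE eq_sym t't.
by apply: eq_expect => s; rewrite !big_cons big_nil mulr1.
Qed.

Lemma expect_hit3 (i : 'I_N) (t t' t'' : 'I_(c i)) h l m :
  t' != t -> t'' != t -> t'' != t' ->
  expect M Om (fun s =>
    hit R (doc s i) t h * hit R (doc s i) t' l * hit R (doc s i) t'' m) =
  topic_moment [:: h; l; m].
Proof.
move=> t't t''t t''t'; rewrite -(expect_hits (L := [:: (t, h); (t', l); (t'', m)])) /=.
  by apply: eq_expect => s; rewrite !big_cons big_nil mulr1 mulrA.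
by rewrite !inE !negb_or !(eq_sym t) (eq_sym t' t'') t't t''t t''t'.
Qed.

Lemma expect_sum_nocc h :
  expect M Om (fun s : outcome n k c => \sum_i nocc R (doc s i) h) =
  topic_moment [:: h] * den1 c.
Proof.
rewrite expect_sum /den1 natr_sum mulr_sumr; apply: eq_bigr => i _.
rewrite /nocc expect_sum; under eq_bigr do rewrite expect_hit.
by rewrite sumr_const card_ord mulr_natr.
Qed.

Lemma expect_sum_pair_hits h l :
  expect M Om (fun s : outcome n k c => \sum_i pair_hits R (doc s i) h l) =
  topic_moment [:: h; l] * den2 c.
Proof.
rewrite expect_sum /den2 mulr_sumr; apply: eq_bigr => i _.
transitivity (\sum_(t : 'I_(c i)) \sum_(t' | t' != t) topic_moment [:: h; l]).
  rewrite /pair_hits expect_sum; apply: eq_bigr => t _.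
  by rewrite expect_sum; apply: eq_bigr => t'; exact: expect_hit2.
by rewrite sum_distinct_pairs_const card_ord.
Qed.

Lemma expect_sum_triple_hits h l m :
  expect M Om (fun s : outcome n k c => \sum_i triple_hits R (doc s i) h l m) =
  topic_moment [:: h; l; m] * den3 c.
Proof.
rewrite expect_sum /den3 mulr_sumr; apply: eq_bigr => i _.
transitivity (\sum_(t : 'I_(c i)) \sum_(t' | t' != t)
                \sum_(t'' | (t'' != t) && (t'' != t')) topic_moment [:: h; l; m]).
  rewrite /triple_hits expect_sum; apply: eq_bigr => t _.
  rewrite expect_sum; apply: eq_bigr => t' t't.
  by rewrite expect_sum; apply: eq_bigr => t'' /andP[]; exact: expect_hit3.
by rewrite sum_distinct_triples_const card_ord.
Qed.

Lemma expect_M1t h : den1 c != 0 :> R ->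
  expect M Om (fun s : outcome n k c => M1t s h) = topic_moment [:: h].
Proof.
move=> den1_neq0.
by rewrite (eq_expect (fun s => M1t_nocc R s h)) expect_divr expect_sum_nocc mulfK.
Qed.

Lemma expect_M2t h l : den2 c != 0 :> R ->
  expect M Om (fun s : outcome n k c => M2t s h l) = topic_moment [:: h; l].
Proof.
move=> den2_neq0.
by rewrite (eq_expect (fun s => M2t_pair_hits R s h l)) expect_divr expect_sum_pair_hits mulfK.
Qed.

Lemma expect_M3t h l m : den3 c != 0 :> R ->
  expect M Om (fun s : outcome n k c => M3t s h l m) = topic_moment [:: h; l; m].
Proof.
move=> den3_neq0.
rewrite (eq_expect (fun s => M3t_triple_hits R s h l m)) expect_divr.
by rewrite expect_sum_triple_hits mulfK.
Qed.

End Moments.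

Lemma natr_falling2 (R : comPzRingType) (m : nat) : (m%:R - 1) * m%:R = (m * (m - 1))%:R :> R.
Proof.
case: m => [|m]; first by rewrite !mulr0.
by rewrite subSS subn0 natrM -[m.+1]addn1 natrD; ring.
Qed.

Lemma natr_falling3 (R : comPzRingType) (m : nat) :
  (m%:R - 2) * (m%:R - 1) * m%:R = (m * (m - 1) * (m - 2))%:R :> R.
Proof.
case: m => [|[|m]]; first by rewrite !mulr0.
  by rewrite subrr mulr0 mul0r.
by rewrite !subSS !subn0 !natrM -[m.+2]addn2 -[m.+1]addn1 !natrD; ring.
Qed.

Lemma den2_natr (R : realFieldType) N (c : 'I_N -> nat) :
  den2 c = (\sum_i c i * (c i - 1))%:R :> R.
Proof. by rewrite /den2 natr_sum; apply: eq_bigr => i _; exact: natr_falling2. Qed.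

Lemma den3_natr (R : realFieldType) N (c : 'I_N -> nat) :
  den3 c = (\sum_i c i * (c i - 1) * (c i - 2))%:R :> R.
Proof. by rewrite /den3 natr_sum; apply: eq_bigr => i _; exact: natr_falling3. Qed.

Theorem theorem2p1 (R : realFieldType) (n k N : nat) (c : 'I_N -> nat)
  (M : 'M[R]_(n, k)) (Om : 'cV[R]_k) :
  (0 < n)%N -> (0 < k)%N -> (0 < N)%N ->
  (forall j, 0 <= Om j 0) -> \sum_(j < k) Om j 0 = 1 ->
  (forall h j, 0 <= M h j) -> (forall j, \sum_(h < n) M h j = 1) ->
  (forall i, 0 < c i)%N ->
  (0 < \sum_(i < N) c i)%N ->
  (0 < \sum_(i < N) c i * (c i - 1))%N ->
  (0 < \sum_(i < N) c i * (c i - 1) * (c i - 2))%N ->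
  forall h l m : 'I_n,
    expect M Om (fun s : outcome n k c => M1t s h) = \sum_(j < k) Om j 0 * M h j /\
    expect M Om (fun s : outcome n k c => M2t s h l) = \sum_(j < k) Om j 0 * M h j * M l j /\
    expect M Om (fun s : outcome n k c => M3t s h l m) =
      \sum_(j < k) Om j 0 * M h j * M l j * M m j.
Proof.
move=> _ _ _ _ Om_sum1 _ M_col_sum1 _ den1_gt0 den2_gt0 den3_gt0 h l m.
have den1_neq0 : den1 c != 0 :> R by rewrite /den1 pnatr_eq0 -lt0n.
have den2_neq0 : den2 c != 0 :> R by rewrite den2_natr pnatr_eq0 -lt0n.
have den3_neq0 : den3 c != 0 :> R by rewrite den3_natr pnatr_eq0 -lt0n.
rewrite !(expect_M1t, expect_M2t, expect_M3t) // /topic_moment.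
by split; [|split]; apply: eq_bigr => j _; rewrite !big_cons big_nil mulr1 ?mulrA.
Qed.
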